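(* Assume the setup of the context, with $d_R\ge 2$, a glue code $H_G$ compatible with the memory via pasting matrices $S\neq 0$, $T$, and $d$ the memory distance. (A) Suppose the glue code is finely devised for $\Sigma$, and consider the measurement-sticker deformed code. Then: (i) $\{hP^{\mathrm T}: h\in\mathrm{rs}H^{M\text{-}M}_X\}=\mathrm{rs}H_X$, where $hP^{\mathrm T}$ denotes the restriction of $h$ to the block $u_0$; (ii) for every $h\in\mathrm{rs}H_Z$, the vector equal to $h$ on $u_0$ and zero elsewhere lies in $\mathrm{rs}H^{M\text{-}M}_Z$; (iii) for every $x\in\mathrm{rs}J_X$ with $xJ_{Z,A}^{\mathrm T}=0$ there exists $x'\in\mathrm{rs}J^{M\text{-}M}_X$ whose restriction to $u_0$ equals $x$; (iv) for every $z\in\mathrm{rs}J_Z$, the vector equal to $z$ on $u_0$ and zero elsewhere lies in $\mathrm{rs}J^{M\text{-}M}_Z+\mathrm{rs}H^{M\text{-}M}_Z$; (v) for every $z\in\mathrm{rs}J_{Z,A}$, the vector equal to $z$ on $u_0$ and zero elsewhere lies in $\mathrm{rs}H^{M\text{-}M}_Z$; (vi) the distance of the measurement-sticker deformed code is at least $\min\{d/|S|,d_R\}$. (B) Suppose the glue code is coarsely devised for $\Sigma$, and consider the branch-sticker deformed code. Then (i) and (ii) hold with $H^{M\text{-}B}_X,H^{M\text{-}B}_Z$ in place of $H^{M\text{-}M}_X,H^{M\text{-}M}_Z$, and moreover: (iii') for every $x\in\mathrm{rs}J_X$ there exists $x'\in\mathrm{rs}J^{M\text{-}B}_X$ whose restriction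 to $u_0$ equals $x$; (iv') for every $z\in\mathrm{rs}J_Z$, the vector equal to $z$ on $u_0$ and zero elsewhere lies in $\mathrm{rs}J^{M\text{-}B}_Z$; (v') for every $z\in\mathrm{rs}J_{Z,A}$ there exists $g\in\mathrm{rs}H^{M\text{-}B}_Z$ such that (the vector equal to $z$ on $u_0$ and zero elsewhere) $+\,g$ is supported entirely in the open-boundary block $u_{d_R-1}$; (vi') the distance of the branch-sticker deformed code is at least $d/|S|$.
   Context: All vectors are row vectors over $\mathbb F_2$. For a matrix $A$, $\mathrm{rs}A$ is its row space and $\ker A=\{x: Ax^{\mathrm T}=0\}$; for a set $V$ of row vectors and a matrix $M$, $VM=\{vM:v\in V\}$. $|x|$ is the Hamming weight and $E_m$ the $m\times m$ identity. The memory is a CSS subsystem code specified by $H_X\in\mathbb F_2^{r_X\times n}$, $H_Z\in\mathbb F_2^{r_Z\times n}$, $J_X,J_Z\in\mathbb F_2^{k\times n}$, $F_X,F_Z\in\mathbb F_2^{k_g\times n}$ satisfying $\ker H_X=\mathrm{rs}H_Z\oplus\mathrm{rs}J_Z\oplus\mathrm{rs}F_Z$, $\ker H_Z=\mathrm{rs}H_X\oplus\mathrm{rs}J_X\oplus\mathrm{rs}F_X$, $J_XJ_Z^{\mathrm T}=E_k$, $F_XF_Z^{\mathrm T}=E_{k_g}$. For matrices $H,J$ with the same number of columns, $d(H,J)=\min\{|e|: e\in\ker H,\ Je^{\mathrm T}\neq0\}$; the memory distance is $d=\min\{d(H_X,J_X),d(H_Z,J_Z)\}$, and the distance of a deformed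 code with matrices $H^{dc}_X,H^{dc}_Z,J^{dc}_X,J^{dc}_Z$ is $\min\{d(H^{dc}_X,J^{dc}_X),d(H^{dc}_Z,J^{dc}_Z)\}$. For $S\in\mathbb F_2^{n_G\times n}$, $|S|=\max_{x\neq0}|xS|/|x|$. Let $v_1,\dots,v_q\in\mathrm{rs}J_Z$ be linearly independent (representing the operator set $\Sigma$), $J_{Z,A}$ the matrix with rows $v_1,\dots,v_q$; extend to a basis $v_1,\dots,v_k$ of $\mathrm{rs}J_Z$ and let $J_{Z,C}$ have rows $v_{q+1},\dots,v_k$. Let $\bar J_Z$ be the invertible $k\times k$ matrix with $\binom{J_{Z,A}}{J_{Z,C}}=\bar J_ZJ_Z$ and define $J_{X,A}\in\mathbb F_2^{q\times n}$, $J_{X,C}\in\mathbb F_2^{(k-q)\times n}$ by $\binom{J_{X,A}}{J_{X,C}}=(\bar J_Z^{-1})^{\mathrm T}J_X$. A glue code is a binary linear code with check matrix $H_G\in\mathbb F_2^{r_G\times n_G}$; it is compatible via pasting matrices $S\in\mathbb F_2^{n_G\times n}$, $T\in\mathbb F_2^{r_X\times r_G}$ if $H_XS^{\mathrm T}=TH_G$; it is coarsely devised for $\Sigma$ if $\mathrm{span}(v_1,\dots,v_q)\subseteq(\ker H_G)S$, and finely devised for $\Sigma$ if there exist $u_1,u_2,\dots\in\mathrm{rs}H_Z\oplus\mathrm{rs}F_Z$ with $\mathrm{span}(v_1,\dots,v_q,u_1,u_2,\dots)=(\ker H_G)S$. When finely devised, fix $\gamma\in\mathbb F_2^{(k-q)\times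 r_G}$ with $J_{X,C}S^{\mathrm T}=\gamma H_G$ (such $\gamma$ exists). Measurement-sticker deformed code: coordinates are split into blocks $u_0\in\mathbb F_2^n$, $u_1,\dots,u_{d_R-1}\in\mathbb F_2^{n_G}$, $w_1,\dots,w_{d_R}\in\mathbb F_2^{r_G}$. $H^{M\text{-}M}_X$ has row-block $0$ equal to $H_X$ on $u_0$ and $T$ on $w_1$, and for $1\le j\le d_R-1$ row-block $j$ equal to $H_G$ on $u_j$, $E_{r_G}$ on $w_j$ and $E_{r_G}$ on $w_{j+1}$ (zero elsewhere). $H^{M\text{-}M}_Z$ has row-block $0$ equal to $H_Z$ on $u_0$, and for $1\le i\le d_R$ row-block $i$ equal to $S$ on $u_0$ (only if $i=1$), $E_{n_G}$ on $u_{i-1}$ (only if $i\ge2$), $E_{n_G}$ on $u_i$ (only if $i\le d_R-1$), and $H_G^{\mathrm T}$ on $w_i$. $J^{M\text{-}M}_X$ equals $J_{X,C}$ on $u_0$, $J_{X,C}S^{\mathrm T}$ on each of $u_1,\dots,u_{d_R-1}$, $0$ on $w_1,\dots,w_{d_R-1}$ and $\gamma$ on $w_{d_R}$; $J^{M\text{-}M}_Z$ equals $J_{Z,C}$ on $u_0$ and $0$ elsewhere. Branch-sticker deformed code: blocks $u_0\in\mathbb F_2^n$, $u_1,\dots,u_{d_R-1}\in\mathbb F_2^{n_G}$, $w_1,\dots,w_{d_R-1}\in\mathbb F_2^{r_G}$. $H^{M\text{-}B}_X$ has row-block $0$ equal to $H_X$ on $u_0$ and $T$ on $w_1$, and for $1\le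 j\le d_R-1$ row-block $j$ equal to $H_G$ on $u_j$, $E_{r_G}$ on $w_j$ and $E_{r_G}$ on $w_{j+1}$ (the latter only if $j\le d_R-2$). $H^{M\text{-}B}_Z$ has row-block $0$ equal to $H_Z$ on $u_0$, and for $1\le i\le d_R-1$ row-block $i$ equal to $S$ on $u_0$ (only if $i=1$), $E_{n_G}$ on $u_{i-1}$ (only if $i\ge 2$), $E_{n_G}$ on $u_i$, and $H_G^{\mathrm T}$ on $w_i$. With $J'_X=\binom{J_{X,A}}{J_{X,C}}$, $J'_Z=\binom{J_{Z,A}}{J_{Z,C}}$: $J^{M\text{-}B}_X$ equals $J'_X$ on $u_0$, $J'_XS^{\mathrm T}$ on each $u_j$ ($1\le j\le d_R-1$) and $0$ on all $w_j$; $J^{M\text{-}B}_Z$ equals $J'_Z$ on $u_0$ and $0$ elsewhere. The block $u_{d_R-1}$ is called the open boundary. *)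

From HB Require Import structures.
From mathcomp Require Import all_boot all_order all_algebra.
Import Order.TTheory GRing.Theory Num.Theory.
Local Open Scope ring_scope.

Notation F2 := 'F_2.

Definition wt {m : nat} (v : 'rV[F2]_m) : nat := #|[set j | v 0 j != 0]|.

(* d(H,J) = min{ |e| : e in ker H, J e^T <> 0 }.  Convention: if no such e
   exists (min of the empty set = infinity) the value is m.+1, which exceeds
   the weight of every vector of length m. *)
Definition dist {m r k : nat} (H : 'M[F2]_(r, m)) (J : 'M[F2]_(k, m)) : nat :=
  \big[minn/m.+1]_(e : 'rV[F2]_m | (H *m e^T == 0) && (J *m e^T != 0)) wt e.

Definition code_dist {m rx rz kx kz : nat} (HX : 'M[F2]_(rx, m)) (HZ : 'M[F2]_(rz, m))
  (JX : 'M[F2]_(kx, m)) (JZ : 'M[F2]_(kz, m)) : nat :=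
  minn (dist HX JX) (dist HZ JZ).

Definition opnorm {nG n : nat} (S : 'M[F2]_(nG, n)) : rat :=
  \big[Num.max/0]_(x : 'rV[F2]_nG | x != 0) ((wt (x *m S))%:R / (wt x)%:R).

Definition mxF {R C : finType} (f : R -> C -> F2) : 'M[F2]_(#|R|, #|C|) :=
  \matrix_(i, j) f (enum_val i) (enum_val j).

(* Coordinates of a deformed code: block u_0 (inl (inl j)), blocks
   u_1..u_nu (inl (inr (a, t)) stands for u_{a+1}), blocks w_1..w_nw
   (inr (b, g) stands for w_{b+1}). *)
Definition Coord (n nu nG nw rG : nat) : finType :=
  (('I_n + ('I_nu * 'I_nG)) + ('I_nw * 'I_rG))%type.

Definition restr0 {n nu nG nw rG : nat} (v : 'rV[F2]_#|Coord n nu nG nw rG|) : 'rV[F2]_n :=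
  \row_j v 0 (enum_rank (inl (inl j) : Coord n nu nG nw rG)).

Definition ext0 {n : nat} (nu nG nw rG : nat) (h : 'rV[F2]_n) : 'rV[F2]_#|Coord n nu nG nw rG| :=
  \row_c match (enum_val c : Coord n nu nG nw rG) with
         | inl (inl j) => h 0 j
         | _ => 0
         end.

(* X-check matrix of the deformed code (u-blocks u_1..u_{dR-1}, w-blocks
   w_1..w_nw; nw = dR for the measurement sticker, nw = dR-1 for the branch
   sticker).  Row block 0 = rows inl i; row block j = a+1 = rows inr (a, g). *)
Definition HXd_f {n rX nG rG : nat} (dR nw : nat) (H_X : 'M[F2]_(rX, n))
  (T : 'M[F2]_(rX, rG)) (H_G : 'M[F2]_(rG, nG))
  (r : ('I_rX + ('I_dR.-1 * 'I_rG))%type) (c : Coord n dR.-1 nG nw rG) : F2 :=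
  match r, c with
  | inl i, inl (inl j) => H_X i j
  | inl i, inr (b, g) => if val b == 0%N then T i g else 0
  | inr (a, g), inl (inr (a', t)) => if a' == a then H_G g t else 0
  | inr (a, g), inr (b, g') =>
      (((val b == val a) || (val b == (val a).+1)) && (g == g'))%:R
  | _, _ => 0
  end.

Definition HXd {n rX nG rG : nat} (dR nw : nat) (H_X : 'M[F2]_(rX, n))
  (T : 'M[F2]_(rX, rG)) (H_G : 'M[F2]_(rG, nG)) :=
  mxF (HXd_f dR nw H_X T H_G).

(* Z-check matrix of the deformed code.  Row block 0 = rows inl i;
   row block i = b+1 (1 <= i <= nw) = rows inr (b, t). *)
Definition HZd_f {n rZ nG rG : nat} (dR nw : nat) (H_Z : 'M[F2]_(rZ, n))
  (S : 'M[F2]_(nG, n)) (H_G : 'M[F2]_(rG, nG))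
  (r : ('I_rZ + ('I_nw * 'I_nG))%type) (c : Coord n dR.-1 nG nw rG) : F2 :=
  match r, c with
  | inl i, inl (inl j) => H_Z i j
  | inr (b, t), inl (inl j) => if val b == 0%N then S t j else 0
  | inr (b, t), inl (inr (a, t')) =>
      ((((val a).+1 == val b) || (val a == val b)) && (t == t'))%:R
  | inr (b, t), inr (b', g) => if val b' == val b then H_G g t else 0
  | _, _ => 0
  end.

Definition HZd {n rZ nG rG : nat} (dR nw : nat) (H_Z : 'M[F2]_(rZ, n))
  (S : 'M[F2]_(nG, n)) (H_G : 'M[F2]_(rG, nG)) :=
  mxF (HZd_f dR nw H_Z S H_G).

Definition JXMM_f {n nG rG c : nat} (dR : nat) (J_XC : 'M[F2]_(c, n))
  (S : 'M[F2]_(nG, n)) (gamma : 'M[F2]_(c, rG))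
  (r : 'I_c) (x : Coord n dR.-1 nG dR rG) : F2 :=
  match x with
  | inl (inl j) => J_XC r j
  | inl (inr (a, t)) => (J_XC *m S^T) r t
  | inr (b, g) => if (val b).+1 == dR then gamma r g else 0
  end.

Definition JXMM {n nG rG c : nat} (dR : nat) (J_XC : 'M[F2]_(c, n))
  (S : 'M[F2]_(nG, n)) (gamma : 'M[F2]_(c, rG)) :=
  mxF (JXMM_f dR J_XC S gamma).

Definition JXMB_f {n nG rG k : nat} (dR : nat) (JX' : 'M[F2]_(k, n))
  (S : 'M[F2]_(nG, n)) (r : 'I_k) (x : Coord n dR.-1 nG dR.-1 rG) : F2 :=
  match x with
  | inl (inl j) => JX' r j
  | inl (inr (a, t)) => (JX' *m S^T) r t
  | inr _ => 0
  end.

Definition JXMB {n nG k : nat} (rG dR : nat) (JX' : 'M[F2]_(k, n))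
  (S : 'M[F2]_(nG, n)) :=
  mxF (@JXMB_f n nG rG k dR JX' S).

Definition JZd_f {n k : nat} (nu nG nw rG : nat) (JZ' : 'M[F2]_(k, n))
  (r : 'I_k) (x : Coord n nu nG nw rG) : F2 :=
  match x with
  | inl (inl j) => JZ' r j
  | _ => 0
  end.

Definition JZd {n k : nat} (nu nG nw rG : nat) (JZ' : 'M[F2]_(k, n)) :=
  mxF (JZd_f nu nG nw rG JZ').

(* (bar J_Z^{-1})^T J_X ; its top q rows are J_{X,A}, its bottom rows J_{X,C} *)
Definition JXprime {n q c : nat} (Jbar : 'M[F2]_(q + c)) (J_X : 'M[F2]_(q + c, n)) :
  'M[F2]_(q + c, n) := (invmx Jbar)^T *m J_X.

Definition open_supp {n nG rG : nat} (dR : nat)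
  (v : 'rV[F2]_#|Coord n dR.-1 nG dR.-1 rG|) : Prop :=
  forall x : Coord n dR.-1 nG dR.-1 rG, v 0 (enum_rank x) != 0 ->
    match x with
    | inl (inr (a, _)) => (val a).+1 == dR.-1
    | _ => false
    end.

From HB Require Import structures.
From mathcomp Require Import all_boot all_order all_algebra.
From mathcomp Require Import zify.
Import Order.TTheory GRing.Theory Num.Theory.

Set Implicit Arguments.
Unset Strict Implicit.
Unset Printing Implicit Defensive.

Local Open Scope ring_scope.

(* The stickers contain the memory blockwise: the X-checks of a deformed code
   restrict on u_0 exactly to H_X, and H_Z sits on u_0.  A logical z of Sigma
   lies in (ker H_G) S, i.e. z = y S for a glue codeword y; the Z-checks of all
   row blocks i >= 1 weighted by y telescope to y S on u_0, and leave y on the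
   open boundary when the last row block is missing (branch sticker).
   For the X-distance, the X-checks of row block j give
   w_{j+1} = w_j + u_j H_G^T.  If some w-block of an X-logical e vanishes,
   folding the preceding u-blocks back onto u_0 through S yields, by
   compatibility H_X S^T = T H_G, an X-logical of the memory of weight at most
   |S| |e|; otherwise e meets all d_R w-blocks.  In the branch sticker the
   block w_{d_R} is absent, so folding always applies.  A Z-logical of a
   deformed code restricts on u_0 to a Z-logical of the memory. *)

Lemma pchar2_F2 : 2 \in [pchar F2].
Proof. exact: pchar_Fp. Qed.

Lemma F2_addr_eq0 (x y : F2) : (x + y == 0) = (x == y).
Proof. by rewrite addr_eq0 (oppr_pchar2 pchar2_F2). Qed.

Lemma mxF2_addrr m k (M : 'M[F2]_(m, k)) : M + M = 0.
Proof. by rewrite -mulr2n -scaler_nat (GRing.pcharf0 pchar2_F2) scale0r. Qed.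

Lemma mxF2_addr_eq0 m k (A B : 'M[F2]_(m, k)) : (A + B == 0) = (A == B).
Proof.
have oppB : - B = B by apply/esym/eqP; rewrite -addr_eq0 mxF2_addrr.
by rewrite addr_eq0 oppB.
Qed.

Section BigCoord.
Variables (R : Type) (idx : R) (op : Monoid.com_law idx).

Lemma big_ord_enum_rank (C : finType) (F : 'I_#|C| -> R) :
  \big[op/idx]_i F i = \big[op/idx]_c F (enum_rank c).
Proof. exact: (reindex enum_rank (onW_bij _ (@enum_rank_bij C))). Qed.

Lemma big_pair (A B : finType) (F : A * B -> R) :
  \big[op/idx]_p F p = \big[op/idx]_a \big[op/idx]_b F (a, b).
Proof. by rewrite pair_big; apply: eq_bigr => -[]. Qed.

Lemma big_Coord n nu nG nw rG (F : Coord n nu nG nw rG -> R) :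
  \big[op/idx]_c F c =
  op (op (\big[op/idx]_j F (inl (inl j)))
         (\big[op/idx]_a \big[op/idx]_t F (inl (inr (a, t)))))
     (\big[op/idx]_b \big[op/idx]_g F (inr (b, g))).
Proof. by rewrite big_sumType /= big_sumType /= !big_pair. Qed.

Lemma big_if_val_eq m k (F : 'I_m -> R) :
  \big[op/idx]_(b : 'I_m) (if val b == k then F b else idx) =
  if insub k is Some b then F b else idx.
Proof.
case: insubP => [b _ <-|Hk].
  rewrite (bigD1 b) //= eqxx big1 ?Monoid.mulm1 // => b' Hb'.
  by case: ifP => // /eqP/val_inj E; rewrite E eqxx in Hb'.
by rewrite big1 // => b _; case: ifP => // /eqP E; rewrite -E ltn_ord in Hk.
Qed.

End BigCoord.

Section Entries.
Variable C : finType.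

Definition entry (v : 'rV[F2]_#|C|) (c : C) := v 0 (enum_rank c).
Definition rowF (f : C -> F2) : 'rV[F2]_#|C| := \row_i f (enum_val i).

Lemma entry_rowF f c : entry (rowF f) c = f c.
Proof. by rewrite /entry /rowF mxE enum_rankK. Qed.

Lemma entryP (u v : 'rV[F2]_#|C|) : (forall c, entry u c = entry v c) -> u = v.
Proof. by move=> H; apply/rowP => i; rewrite -(enum_valK i); exact: H. Qed.

Lemma entryD u v c : entry (u + v) c = entry u c + entry v c.
Proof. by rewrite /entry mxE. Qed.

End Entries.
Arguments entry {C}.
Arguments rowF {C}.

Section MxF.
Variables (R C : finType) (f : R -> C -> F2).

Lemma entry_mulmxF (x : 'rV[F2]_#|R|) c :
  entry (x *m mxF f) c = \sum_r entry x r * f r c.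
Proof.
rewrite /entry mxE big_ord_enum_rank; apply: eq_bigr => r _.
by rewrite /mxF mxE !enum_rankK.
Qed.

Lemma mxF_mulmx_tr (e : 'rV[F2]_#|C|) r :
  (mxF f *m e^T) (enum_rank r) 0 = \sum_c f r c * entry e c.
Proof.
rewrite mxE big_ord_enum_rank; apply: eq_bigr => c _.
by rewrite /mxF /entry !mxE !enum_rankK.
Qed.

Lemma mxF_mulmx_tr_eq0 (e : 'rV[F2]_#|C|) :
  (mxF f *m e^T == 0) = [forall r, \sum_c f r c * entry e c == 0].
Proof.
apply/eqP/forallP => [H r|H]; first by rewrite -mxF_mulmx_tr H mxE.
by apply/matrixP => i j; rewrite ord1 -(enum_valK i) mxF_mulmx_tr mxE; exact/eqP.
Qed.

Lemma mxF_mulmx_tr_neq0 (e : 'rV[F2]_#|C|) k (V : 'rV[F2]_k) (g : R -> 'I_k) :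
  (forall r, (mxF f *m e^T) (enum_rank r) 0 = V 0 (g r)) ->
  mxF f *m e^T != 0 -> V != 0.
Proof.
move=> H; apply: contra => /eqP V0; apply/eqP/matrixP => i j.
by rewrite ord1 -(enum_valK i) H V0 !mxE.
Qed.

End MxF.

Lemma wtE m (v : 'rV[F2]_m) : wt v = (\sum_j (v (0%R : 'I_1) j != 0%R : nat))%N.
Proof.
rewrite /wt -sum1_card big_mkcond /=; apply: eq_bigr => j _; rewrite inE.
by case: ifP.
Qed.

Lemma wt0 m : wt (0 : 'rV[F2]_m) = 0%N.
Proof. by rewrite wtE big1 // => j _; rewrite mxE eqxx. Qed.

Lemma wt_gt0 m (v : 'rV[F2]_m) : v != 0 -> (0 < wt v)%N.
Proof.
move=> Hv; rewrite wtE; case: (pickP (fun j => v 0 j != 0)) => [j Hj|H].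
  by rewrite (bigD1 j) //= Hj.
by case/eqP: Hv; apply/rowP => j; rewrite mxE; move/negbFE/eqP: (H j).
Qed.

Lemma wtD m (u v : 'rV[F2]_m) : (wt (u + v) <= wt u + wt v)%N.
Proof.
rewrite !wtE -big_split /=; apply: leq_sum => j _; rewrite mxE.
have [->|u0] := eqVneq (u 0 j) 0; first by rewrite add0r leq_addl.
by case: (_ + _ != 0); rewrite ?leq0n // u0.
Qed.

Lemma wt_sum m k (f : nat -> 'rV[F2]_m) :
  (wt (\sum_(0 <= a < k) f a) <= \sum_(0 <= a < k) wt (f a))%N.
Proof.
elim: k => [|k IH]; first by rewrite !big_geq // wt0.
by rewrite !big_nat_recr //=; apply: leq_trans (wtD _ _) _; rewrite leq_add2r.
Qed.

Lemma wt_le m (v : 'rV[F2]_m) : (wt v <= m)%N.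
Proof. by rewrite /wt (leq_trans (max_card _)) ?card_ord. Qed.

Lemma leq_bigminn (I : finType) (P : pred I) (F : I -> nat) x0 j :
  P j -> (\big[minn/x0]_(i | P i) F i <= F j)%N.
Proof.
have := mem_index_enum j; rewrite unlock; elim: (index_enum I) => //= i l IH.
rewrite inE => /orP [/eqP-> ->|/IH Fl Pj]; first by rewrite geq_minl.
by case: ifPn => _; [rewrite geq_min Fl ?orbT|apply: Fl].
Qed.

Lemma dist_le_wt m r k (H : 'M[F2]_(r, m)) (J : 'M[F2]_(k, m)) e :
  e *m H^T = 0 -> J *m e^T != 0 -> (dist H J <= wt e)%N.
Proof.
move=> He Je; apply: leq_bigminn; rewrite Je andbT.
by rewrite -[H]trmxK -trmx_mul He trmx0.
Qed.

Lemma dist_le_succ m r k (H : 'M[F2]_(r, m)) (J : 'M[F2]_(k, m)) :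
  (dist H J <= m.+1)%N.
Proof.
apply: (big_ind (fun x => x <= m.+1)%N) => // [a b Ha _|e _].
  by rewrite geq_min Ha.
by rewrite ltnW // ltnS wt_le.
Qed.

Lemma ler_dist m r k (H : 'M[F2]_(r, m)) (J : 'M[F2]_(k, m)) (B : rat) :
  B <= (m.+1)%:R ->
  (forall e, H *m e^T = 0 -> J *m e^T != 0 -> B <= (wt e)%:R) ->
  B <= (dist H J)%:R.
Proof.
move=> Bm Bwt; apply: (big_ind (fun x => B <= x%:R)) => // [a b Ba Bb|e].
  by rewrite /minn; case: ifP.
by case/andP => /eqP He Je; apply: Bwt.
Qed.

Lemma dist_mulmx m r k p (H : 'M[F2]_(r, m)) (A : 'M[F2]_(k, p))
    (J : 'M[F2]_(p, m)) :
  (dist H J <= dist H (A *m J))%N.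
Proof.
apply: (big_ind (fun x => dist H J <= x)%N) => [||e /andP[/eqP He AJe]].
- exact: dist_le_succ.
- by move=> a b Ha Hb; rewrite leq_min Ha Hb.
apply: leq_bigminn; rewrite He eqxx /=; apply: contraNneq AJe => Je.
by rewrite -mulmxA Je mulmx0.
Qed.

Lemma opnorm_ge0 nG n (S : 'M[F2]_(nG, n)) : 0 <= opnorm S.
Proof. exact: bigmax_ge_id. Qed.

Lemma wt_mulmx_le nG n (S : 'M[F2]_(nG, n)) (y : 'rV[F2]_nG) :
  (wt (y *m S))%:R <= opnorm S * (wt y)%:R.
Proof.
have [->|y0] := eqVneq y 0; first by rewrite mul0mx !wt0 mulr0.
rewrite -ler_pdivrMr ?ltr0n ?wt_gt0 //.
exact: (le_bigmax_cond _ (fun x => (wt (x *m S))%:R / (wt x)%:R) y0).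
Qed.

Lemma opnorm_ge1 nG n (S : 'M[F2]_(nG, n)) : S != 0 -> 1 <= opnorm S.
Proof.
move=> S0; have [[t j] /= Stj|S0'] := pickP (fun p : 'I_nG * 'I_n => S p.1 p.2 != 0).
  have wt_delta : wt (delta_mx 0 t : 'rV[F2]_nG) = 1%N.
    rewrite wtE (bigD1 t) //= big1 ?addn0; first by rewrite mxE !eqxx.
    by move=> i Hi; rewrite mxE (negbTE Hi) andbF eqxx.
  have := wt_mulmx_le S (delta_mx 0 t); rewrite wt_delta mulr1; apply: le_trans.
  rewrite ler1n wt_gt0 //; apply: contra Stj => /eqP/matrixP/(_ 0 j).
  by rewrite -rowE !mxE => ->.
case/eqP: S0; apply/matrixP => t j; move: (S0' (t, j)) => /= /negbFE /eqP ->.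
by rewrite mxE.
Qed.

Lemma opnorm_gt0 nG n (S : 'M[F2]_(nG, n)) : S != 0 -> 0 < opnorm S.
Proof. by move/opnorm_ge1; apply: lt_le_trans ltr01. Qed.

Section Blocks.
Variables n nu nG nw rG : nat.
Local Notation Crd := (Coord n nu nG nw rG).
Implicit Types (e : 'rV[F2]_#|Crd|) (h : 'rV[F2]_n).

Lemma restr0E e j : restr0 e 0 j = entry e (inl (inl j)).
Proof. by rewrite /restr0 mxE. Qed.

Lemma entry_ext0 h (c : Crd) :
  entry (ext0 nu nG nw rG h) c = if c is inl (inl j) then h 0 j else 0.
Proof. by rewrite /entry /ext0 mxE enum_rankK. Qed.

Lemma ext0D h h' : ext0 nu nG nw rG (h + h') = ext0 nu nG nw rG h + ext0 nu nG nw rG h'.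
Proof.
apply: entryP => c; rewrite entryD !entry_ext0.
by case: c => [[j|]|] //=; rewrite ?mxE ?addr0.
Qed.

(* ublock e k and wblock e k are u_{k+1} and w_{k+1}; blocks out of range read
   as 0, which models the absent block w_{d_R} of the branch sticker. *)
Definition ublock e (k : nat) : 'rV[F2]_nG :=
  \row_t if insub k is Some a then entry e (inl (inr (a, t)) : Crd) else 0.

Definition wblock e (k : nat) : 'rV[F2]_rG :=
  \row_g if insub k is Some b then entry e (inr (b, g) : Crd) else 0.

Lemma sum_restr0_mul e k (M : 'M[F2]_(k, n)) r :
  \sum_j M r j * entry e (inl (inl j) : Crd) = (restr0 e *m M^T) 0 r.
Proof. by rewrite mxE; apply: eq_bigr => j _; rewrite restr0E mxE mulrC. Qed.

Lemma sum_ublocks_mul e k (M : 'M[F2]_(k, nG)) r :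
  \sum_a \sum_t M r t * entry e (inl (inr (a, t)) : Crd) =
  ((\sum_(0 <= a < nu) ublock e a) *m M^T) 0 r.
Proof.
rewrite mulmx_suml summxE big_mkord; apply: eq_bigr => a _.
by rewrite mxE /ublock valK; apply: eq_bigr => t _; rewrite !mxE mulrC.
Qed.

Lemma sum_wblock_mul e k (M : 'M[F2]_(k, rG)) r i :
  \sum_(b : 'I_nw) (if val b == i then \sum_g M r g * entry e (inr (b, g) : Crd) else 0)
  = (wblock e i *m M^T) 0 r.
Proof.
rewrite big_if_val_eq mxE /wblock; case: insubP => [b _ _|_].
  by apply: eq_bigr => g _; rewrite !mxE mulrC.
by rewrite big1 // => g _; rewrite !mxE mul0r.
Qed.

Lemma wt_blocks e :
  wt e = (wt (restr0 e) + \sum_(0 <= a < nu) wt (ublock e a)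
          + \sum_(0 <= b < nw) wt (wblock e b))%N.
Proof.
rewrite [LHS]wtE big_ord_enum_rank big_Coord wtE !big_mkord.
congr (_ + _ + _)%N.
- by apply: eq_bigr => j _; rewrite restr0E.
- apply: eq_bigr => a _; rewrite wtE /ublock valK.
  by apply: eq_bigr => t _; rewrite mxE.
- apply: eq_bigr => b _; rewrite wtE /wblock valK.
  by apply: eq_bigr => g _; rewrite mxE.
Qed.

Lemma wt_wblocks_neq0 e : (forall b : 'I_nw, wblock e b != 0) -> (nw <= wt e)%N.
Proof.
move=> w_neq0; rewrite wt_blocks; apply: leq_trans (leq_addl _ _).
rewrite big_mkord -[X in (X <= _)%N]card_ord -sum1_card.
by apply: leq_sum => b _; apply: wt_gt0.
Qed.

Definition fold0 (S : 'M[F2]_(nG, n)) e k :=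
  restr0 e + (\sum_(0 <= a < k) ublock e a) *m S.

Lemma wt_fold0_le (S : 'M[F2]_(nG, n)) e k : S != 0 -> (k <= nu)%N ->
  (wt (fold0 S e k))%:R <= opnorm S * (wt e)%:R :> rat.
Proof.
move=> S0 k_le; have S_ge1 := opnorm_ge1 S0.
have wt_u : (wt ((\sum_(0 <= a < k) ublock e a) *m S))%:R
    <= opnorm S * (\sum_(0 <= a < nu) wt (ublock e a))%:R :> rat.
  apply: le_trans (wt_mulmx_le _ _) _; rewrite ler_wpM2l ?opnorm_ge0 // ler_nat.
  apply: leq_trans (wt_sum _ _) _.
  by rewrite (@big_cat_nat _ _ _ k 0 nu) //= leq_addr.
apply: le_trans (_ : (wt (restr0 e))%:R
    + (wt ((\sum_(0 <= a < k) ublock e a) *m S))%:R <= _).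
  by rewrite -natrD ler_nat wtD.
apply: le_trans (lerD (lexx _) wt_u) _.
rewrite wt_blocks !natrD !mulrDr -addrA lerD //.
  by rewrite -[X in X <= _]mul1r ler_wpM2r.
by rewrite lerDl mulr_ge0 ?opnorm_ge0.
Qed.

End Blocks.

Definition rowF_inl (B : finType) k (x : 'rV[F2]_k) : 'rV[F2]_#|{: 'I_k + B}| :=
  rowF (fun r => if r is inl i then x 0 i else 0).

Section Checks.
Variables (n rX rZ nG rG dR nw : nat).
Variables (H_X : 'M[F2]_(rX, n)) (H_Z : 'M[F2]_(rZ, n)) (T : 'M[F2]_(rX, rG))
  (H_G : 'M[F2]_(rG, nG)) (S : 'M[F2]_(nG, n)).
Local Notation Crd := (Coord n dR.-1 nG nw rG).

Lemma restr0_mulmx_HXd x :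
  restr0 (x *m HXd dR nw H_X T H_G) = (\row_i entry x (inl i)) *m H_X.
Proof.
apply/rowP => j; rewrite restr0E entry_mulmxF big_sumType /= [X in _ + X]big1 ?addr0.
  by rewrite mxE; apply: eq_bigr => i _; rewrite mxE.
by case=> a g _; rewrite mulr0.
Qed.

Lemma HXd_restr0P (v : 'rV[F2]_n) :
  (v <= H_X)%MS <-> exists h, (h <= HXd dR nw H_X T H_G)%MS /\ restr0 h = v.
Proof.
split=> [/submxP[x ->]|[h [/submxP[x ->] <-]]]; last first.
  by rewrite restr0_mulmx_HXd submxMl.
exists (rowF_inl _ x *m HXd dR nw H_X T H_G); split; first exact: submxMl.
by rewrite restr0_mulmx_HXd; congr (_ *m _); apply/rowP => i; rewrite mxE entry_rowF.
Qed.

Lemma ext0_HZd_sub (h : 'rV[F2]_n) :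
  (h <= H_Z)%MS -> (ext0 dR.-1 nG nw rG h <= HZd dR nw H_Z S H_G)%MS.
Proof.
case/submxP => x ->; apply/submxP; exists (rowF_inl _ x).
apply: entryP => c; rewrite entry_mulmxF entry_ext0 big_sumType /=.
rewrite [X in _ + X]big1 ?addr0;
  last by move=> [b t] _; rewrite entry_rowF mul0r.
case: c => [[j|[a t]]|[b g]] /=; last 2 first.
- by rewrite big1 // => i _; rewrite mulr0.
- by rewrite big1 // => i _; rewrite mulr0.
by rewrite mxE; apply: eq_bigr => i _; rewrite entry_rowF.
Qed.

Definition zstack (y : 'rV[F2]_nG) : 'rV[F2]_#|{: 'I_rZ + 'I_nw * 'I_nG}| :=
  rowF (fun r => if r is inr (_, t) then y 0 t else 0).

Lemma entry_zstack_HZd (y : 'rV[F2]_nG) (c : Crd) :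
  entry (zstack y *m HZd dR nw H_Z S H_G) c =
  match c with
  | inl (inl j) => (0 < nw)%N%:R * (y *m S) 0 j
  | inl (inr (a, t)) => ((val a < nw)%N%:R + ((val a).+1 < nw)%N%:R) * y 0 t
  | inr (b, g) => (y *m H_G^T) 0 g
  end.
Proof.
have count_ord m k (x : F2) :
    \sum_(b : 'I_m) (if val b == k then x else 0) = (k < m)%N%:R * x.
  rewrite (big_if_val_eq _ _ (fun _ => x)).
  by case: insubP => [b _ <-|/negbTE->]; rewrite ?ltn_ord ?mul1r ?mul0r.
rewrite entry_mulmxF big_sumType /= big1 ?add0r; last first.
  by move=> i _; rewrite entry_rowF mul0r.
rewrite big_pair /=.
case: c => [[j|[a t]]|[b g]] /=.
- rewrite -count_ord; apply: eq_bigr => b _; rewrite mxE.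
  case: ifP => _; last by rewrite big1 // => t _; rewrite mulr0.
  by apply: eq_bigr => t _; rewrite entry_rowF.
- rewrite mulrDl -!count_ord -big_split /=; apply: eq_bigr => b _.
  rewrite (bigD1 t) //= big1 ?addr0; last first.
    by move=> t' /negbTE Ht; rewrite Ht andbF mulr0.
  rewrite eqxx andbT entry_rowF.
  case: (eqVneq (val b) a) => [<-|Hab].
    by rewrite orbT mulr1 (ltn_eqF (ltnSn _)) addr0.
  by rewrite orbF add0r eq_sym; case: eqP => _; rewrite ?mulr1 ?mulr0.
- rewrite mxE (bigD1 b) //= [X in _ + X]big1 ?addr0; last first.
    move=> b' Hb'; rewrite big1 // => t _.
    by rewrite val_eqE eq_sym (negbTE Hb') mulr0.
  by rewrite eqxx; apply: eq_bigr => t _; rewrite entry_rowF mxE.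
Qed.

End Checks.

Lemma sub_kermx_mulP n nG rG (H_G : 'M[F2]_(rG, nG)) (S : 'M[F2]_(nG, n))
    (z : 'rV[F2]_n) :
  (z <= kermx H_G^T *m S)%MS -> exists2 y, y *m H_G^T = 0 & z = y *m S.
Proof.
case/submxP => w ->; exists (w *m kermx H_G^T); last by rewrite mulmxA.
by rewrite -mulmxA mulmx_ker mulmx0.
Qed.

Section GlueImages.
Variables (n rZ nG rG dR : nat).
Variables (H_Z : 'M[F2]_(rZ, n)) (H_G : 'M[F2]_(rG, nG)) (S : 'M[F2]_(nG, n)).
Hypothesis dR_ge2 : (2 <= dR)%N.
Variable z : 'rV[F2]_n.
Hypothesis z_glue : (z <= kermx H_G^T *m S)%MS.

(* Write z = y S with y a glue codeword and put y in every Z-row block i >= 1: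
   each inner u-block receives y twice, so only y S on u_0 survives. *)
Lemma ext0_glue_HZd_sub : (ext0 dR.-1 nG dR rG z <= HZd dR dR H_Z S H_G)%MS.
Proof.
have [y y_glue ->] := sub_kermx_mulP z_glue.
apply/submxP; exists (zstack rZ dR y); apply: entryP => c.
rewrite entry_zstack_HZd entry_ext0; case: c => [[j|[a t]]|[b g]].
- by rewrite (leq_trans _ dR_ge2) // mul1r.
- have a_lt : (val a < dR.-1)%N := ltn_ord a.
  have -> : (val a < dR)%N by lia.
  have -> : ((val a).+1 < dR)%N by lia.
  by rewrite (addrr_pchar2 pchar2_F2) mul0r.
- by rewrite y_glue mxE.
Qed.

(* With one row block fewer, the last u-block receives y only once. *)
Lemma ext0_glue_HZd_open :
  exists g, (g <= HZd dR dR.-1 H_Z S H_G)%MS /\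
    open_supp dR (ext0 dR.-1 nG dR.-1 rG z + g).
Proof.
have [y y_glue ->] := sub_kermx_mulP z_glue.
exists (zstack rZ dR.-1 y *m HZd dR dR.-1 H_Z S H_G); split; first exact: submxMl.
move=> c; rewrite -/(entry _ c) entryD entry_zstack_HZd entry_ext0.
case: c => [[j|[a t]]|[b g]].
- have -> : (0 < dR.-1)%N by lia.
  by rewrite mul1r (addrr_pchar2 pchar2_F2) eqxx.
- rewrite add0r ltn_ord; case: ltnP => a_ge.
    by rewrite (addrr_pchar2 pchar2_F2) mul0r eqxx.
  by move=> _; rewrite eqn_leq a_ge andbT ltn_ord.
- by rewrite add0r y_glue mxE eqxx.
Qed.

End GlueImages.

Section LogicalBases.
Variables (n q c : nat) (J_X J_Z : 'M[F2]_(q + c, n)) (J_ZA : 'M[F2]_(q, n))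
  (J_ZC : 'M[F2]_(c, n)) (Jbar : 'M[F2]_(q + c)).
Hypothesis JX_JZ : J_X *m J_Z^T = 1%:M.
Hypothesis Jbar_unit : Jbar \in unitmx.
Hypothesis JZ_Jbar : col_mx J_ZA J_ZC = Jbar *m J_Z.
Local Notation J'X := (JXprime Jbar J_X).

Lemma JX_JXprime : J_X = Jbar^T *m J'X.
Proof. by rewrite /JXprime mulmxA -trmx_mul mulVmx // trmx1 mul1mx. Qed.

Lemma JXprime_sub : (J_X <= J'X)%MS.
Proof. by rewrite {1}JX_JXprime submxMl. Qed.

Lemma JXprime_dual : J'X *m (col_mx J_ZA J_ZC)^T = 1%:M.
Proof.
rewrite JZ_Jbar /JXprime trmx_mul mulmxA -(mulmxA _ J_X) JX_JZ mulmx1.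
by rewrite -trmx_mul mulmxV // trmx1.
Qed.

Lemma JXprime_blocks : usubmx J'X *m J_ZA^T = 1%:M /\ dsubmx J'X *m J_ZA^T = 0.
Proof.
have := JXprime_dual; rewrite -[J'X in J'X *m _]vsubmxK tr_col_mx mul_col_row.
by rewrite scalar_mx_block; case/eq_block_mx => -> _ -> _.
Qed.

Lemma JX_sub_JXC (x : 'rV[F2]_n) :
  (x <= J_X)%MS -> x *m J_ZA^T = 0 -> (x <= dsubmx J'X)%MS.
Proof.
move/submxP => [a ->]; set b := a *m Jbar^T.
have -> : a *m J_X = lsubmx b *m usubmx J'X + rsubmx b *m dsubmx J'X.
  by rewrite -mul_row_col hsubmxK vsubmxK -mulmxA -JX_JXprime.
have [JXA_ZA JXC_ZA] := JXprime_blocks.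
rewrite mulmxDl -!mulmxA JXA_ZA JXC_ZA mulmx1 mulmx0 addr0 => ->.
by rewrite mul0mx add0r submxMl.
Qed.

End LogicalBases.

Section LogicalChecks.
Variables (n nG rG dR k : nat) (S : 'M[F2]_(nG, n)).

Lemma JXMM_restr0 (gamma : 'M[F2]_(k, rG)) (J : 'M[F2]_(k, n)) (x : 'rV[F2]_n) :
  (x <= J)%MS -> exists x', (x' <= JXMM dR J S gamma)%MS /\ restr0 x' = x.
Proof.
case/submxP => b ->; exists (rowF (fun i => b 0 i) *m JXMM dR J S gamma).
split; first exact: submxMl.
apply/rowP => j; rewrite restr0E entry_mulmxF !mxE; apply: eq_bigr => i _.
by rewrite entry_rowF.
Qed.

Lemma JXMB_restr0 (J : 'M[F2]_(k, n)) (x : 'rV[F2]_n) :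
  (x <= J)%MS -> exists x', (x' <= JXMB rG dR J S)%MS /\ restr0 x' = x.
Proof.
case/submxP => b ->; exists (rowF (fun i => b 0 i) *m JXMB rG dR J S).
split; first exact: submxMl.
apply/rowP => j; rewrite restr0E entry_mulmxF !mxE; apply: eq_bigr => i _.
by rewrite entry_rowF.
Qed.

Lemma ext0_JZd_sub nu nw (J : 'M[F2]_(k, n)) (z : 'rV[F2]_n) :
  (z <= J)%MS -> (ext0 nu nG nw rG z <= JZd nu nG nw rG J)%MS.
Proof.
case/submxP => b ->; apply/submxP; exists (rowF (fun i => b 0 i)).
apply: entryP => c; rewrite entry_mulmxF entry_ext0.
case: c => [[j|[a t]]|[b' g]] /=; last 2 first.
- by rewrite big1 // => i _; rewrite mulr0.
- by rewrite big1 // => i _; rewrite mulr0.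
by rewrite mxE; apply: eq_bigr => i _; rewrite entry_rowF.
Qed.

End LogicalChecks.

Section Syndromes.
Variables (n nG rG dR k : nat) (S : 'M[F2]_(nG, n)) (J : 'M[F2]_(k, n)).

Lemma JXMM_syndrome (gamma : 'M[F2]_(k, rG)) (e : 'rV[F2]_#|Coord n dR.-1 nG dR rG|) r :
  (0 < dR)%N ->
  (JXMM dR J S gamma *m e^T) (enum_rank r) 0 =
  (restr0 e *m J^T + (\sum_(0 <= a < dR.-1) ublock e a) *m (J *m S^T)^T
    + wblock e dR.-1 *m gamma^T) 0 r.
Proof.
move=> dR_gt0; rewrite mxF_mulmx_tr big_Coord /= [RHS]mxE [X in _ = X + _]mxE.
rewrite -sum_restr0_mul -sum_ublocks_mul -sum_wblock_mul; congr (_ + _ + _).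
have eqS_pred i : (i.+1 == dR) = (i == dR.-1).
  by rewrite -[dR in LHS](prednK dR_gt0) eqSS.
apply: eq_bigr => b _; rewrite eqS_pred.
by case: ifP => _ //; rewrite big1 // => g _; rewrite mul0r.
Qed.

Lemma JXMB_syndrome (e : 'rV[F2]_#|Coord n dR.-1 nG dR.-1 rG|) r :
  (JXMB rG dR J S *m e^T) (enum_rank r) 0 =
  (restr0 e *m J^T + (\sum_(0 <= a < dR.-1) ublock e a) *m (J *m S^T)^T) 0 r.
Proof.
rewrite mxF_mulmx_tr big_Coord /= [X in _ + X]big1 ?addr0; last first.
  by move=> b _; rewrite big1 // => g _; rewrite mul0r.
by rewrite mxE -sum_restr0_mul -sum_ublocks_mul.
Qed.

Lemma JZd_syndrome nu nw (e : 'rV[F2]_#|Coord n nu nG nw rG|) r :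
  (JZd nu nG nw rG J *m e^T) (enum_rank r) 0 = (restr0 e *m J^T) 0 r.
Proof.
rewrite mxF_mulmx_tr big_Coord /= [X in _ + X + _]big1; last first.
  by move=> a _; rewrite big1 // => t _; rewrite mul0r.
rewrite [X in _ + X]big1; last by move=> b _; rewrite big1 // => g _; rewrite mul0r.
by rewrite !addr0 sum_restr0_mul.
Qed.

End Syndromes.

Section XKernel.
Variables (n rX nG rG dR nw : nat).
Variables (H_X : 'M[F2]_(rX, n)) (T : 'M[F2]_(rX, rG)) (H_G : 'M[F2]_(rG, nG)).
Variable e : 'rV[F2]_#|Coord n dR.-1 nG nw rG|.
Hypothesis e_ker : HXd dR nw H_X T H_G *m e^T = 0.
Local Notation u := (ublock e).
Local Notation w := (wblock e).

Let HXd_row_sum r : \sum_c HXd_f dR nw H_X T H_G r c * entry e c = 0.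
Proof. by move/eqP: e_ker; rewrite mxF_mulmx_tr_eq0 => /forallP /(_ r) /eqP. Qed.

Lemma restr0_HX_syndrome : restr0 e *m H_X^T = w 0 *m T^T.
Proof.
apply/rowP => i; apply/eqP; rewrite -F2_addr_eq0 -sum_restr0_mul -sum_wblock_mul.
rewrite -[X in _ == X](HXd_row_sum (inl i)) big_Coord /=.
rewrite [X in _ == _ + X + _]big1 ?addr0; last first.
  by move=> a _; rewrite big1 // => t _; rewrite mul0r.
apply/eqP; congr (_ + _); apply: eq_bigr => b _; case: ifP => _ //.
by rewrite big1 // => g _; rewrite mul0r.
Qed.

Lemma wblock_step (a : 'I_dR.-1) : w a.+1 = w a + u a *m H_G^T.
Proof.
apply/eqP; rewrite -mxF2_addr_eq0 addrCA addrA; apply/eqP/rowP => g.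
rewrite [RHS]mxE -(HXd_row_sum (inr (a, g))) big_Coord /= big1 ?add0r; last first.
  by move=> j _; rewrite mul0r.
rewrite addrC mxE; congr (_ + _).
  rewrite (bigD1 a) //= [X in _ + X]big1 ?addr0; last first.
    by move=> a' a'a; rewrite big1 // => t _; rewrite (negbTE a'a) mul0r.
  by rewrite eqxx mxE /ublock valK; apply: eq_bigr => t _; rewrite !mxE mulrC.
rewrite !mxE -!(@big_if_val_eq _ 0 +%R _ _ (fun b => entry e (inr (b, g)))).
rewrite -big_split /=.
apply: eq_bigr => b _; rewrite (bigD1 g) //= big1 ?addr0; last first.
  by move=> g' g'g; rewrite eq_sym in g'g; rewrite (negbTE g'g) andbF mul0r.
rewrite eqxx andbT; have [->|ba] := eqVneq (b : nat) a.
  by rewrite (ltn_eqF (ltnSn _)) /= mul1r addr0.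
by rewrite add0r /=; case: ifP => _; rewrite /= ?mul1r ?mul0r.
Qed.

Lemma wblock_telescope k : (k <= dR.-1)%N ->
  w k = w 0 + (\sum_(0 <= a < k) u a) *m H_G^T.
Proof.
elim: k => [|k IH] k_le; first by rewrite big_geq // mul0mx addr0.
rewrite (wblock_step (Ordinal k_le)) IH ?(ltnW k_le) //.
by rewrite big_nat_recr //= mulmxDl addrA.
Qed.

Lemma wblock0_eq k : (k <= dR.-1)%N -> w k = 0 ->
  w 0 = (\sum_(0 <= a < k) u a) *m H_G^T.
Proof.
by move=> k_le wk0; apply/eqP; rewrite -mxF2_addr_eq0 -wblock_telescope // wk0.
Qed.

Variable S : 'M[F2]_(nG, n).
Hypothesis HX_S : H_X *m S^T = T *m H_G.

(* Compatibility turns the u-blocks folded back onto u_0 into the syndrome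
   of w_1, which cancels the one of restr0 e. *)
Lemma fold0_HX k : (k <= dR.-1)%N -> w k = 0 -> fold0 S e k *m H_X^T = 0.
Proof.
move=> k_le wk0; rewrite mulmxDl restr0_HX_syndrome (wblock0_eq k_le wk0).
by rewrite -!mulmxA -trmx_mul -HX_S trmx_mul trmxK mxF2_addrr.
Qed.

End XKernel.

Lemma mulmx_trC_eq0 m r k (A : 'M[F2]_(r, m)) (B : 'M[F2]_(k, m)) :
  (A *m B^T == 0) = (B *m A^T == 0).
Proof. by rewrite -[A *m B^T]trmxK trmx_mul trmxK trmx_eq0. Qed.

Lemma card_Coord_ge n nu nG nw rG : (n <= #|Coord n nu nG nw rG|)%N.
Proof. by rewrite /Coord !card_sum !card_ord -addnA leq_addr. Qed.

Lemma ler_div_opnorm nG n (S : 'M[F2]_(nG, n)) (x : nat) :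
  S != 0 -> x%:R / opnorm S <= x%:R :> rat.
Proof.
by move=> S0; rewrite ler_pdivrMr ?opnorm_gt0 // ler_peMr ?opnorm_ge1.
Qed.

Lemma ler_dist_div_card n nu nG nw rG r k (H : 'M[F2]_(r, n)) (J : 'M[F2]_(k, n))
    (S : 'M[F2]_(nG, n)) :
  S != 0 -> (dist H J)%:R / opnorm S <= (#|Coord n nu nG nw rG|).+1%:R :> rat.
Proof.
move=> S0; apply: le_trans (ler_div_opnorm _ S0) _.
by rewrite ler_nat (leq_trans (dist_le_succ _ _)) // ltnS card_Coord_ge.
Qed.

Section ZDistance.
Variables (n rZ nG rG dR nw k : nat).
Variables (H_Z : 'M[F2]_(rZ, n)) (S : 'M[F2]_(nG, n)) (H_G : 'M[F2]_(rG, nG)).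
Variable J : 'M[F2]_(k, n).

Lemma restr0_HZ_syndrome (e : 'rV[F2]_#|Coord n dR.-1 nG nw rG|) :
  HZd dR nw H_Z S H_G *m e^T = 0 -> restr0 e *m H_Z^T = 0.
Proof.
move/eqP; rewrite mxF_mulmx_tr_eq0 => /forallP e_ker; apply/rowP => i.
rewrite -sum_restr0_mul mxE -[RHS](eqP (e_ker (inl i))) big_Coord /=.
rewrite [X in _ = _ + X + _]big1; last first.
  by move=> a _; rewrite big1 // => t _; rewrite mul0r.
by rewrite [X in _ = _ + X]big1 ?addr0 // => b _; rewrite big1 // => g _; rewrite mul0r.
Qed.

Lemma dist_JZd :
  (dist H_Z J <= dist (HZd dR nw H_Z S H_G) (JZd dR.-1 nG nw rG J))%N.
Proof.
apply: (big_ind (fun x => dist H_Z J <= x)%N) => [||e /andP[/eqP e_ker e_log]].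
- by rewrite (leq_trans (dist_le_succ _ _)) // ltnS card_Coord_ge.
- by move=> a b Ha Hb; rewrite leq_min Ha Hb.
rewrite wt_blocks -addnA (leq_trans _ (leq_addr _ _)) // dist_le_wt //.
  exact: restr0_HZ_syndrome.
rewrite -mulmx_trC_eq0; apply: mxF_mulmx_tr_neq0 e_log => r.
exact: JZd_syndrome.
Qed.

End ZDistance.

Section XDistance.
Variables (n rX nG rG dR k : nat).
Variables (H_X : 'M[F2]_(rX, n)) (T : 'M[F2]_(rX, rG)) (H_G : 'M[F2]_(rG, nG)).
Variables (S : 'M[F2]_(nG, n)) (J : 'M[F2]_(k, n)).
Hypothesis dR_ge2 : (2 <= dR)%N.
Hypothesis HX_S : H_X *m S^T = T *m H_G.
Hypothesis S_neq0 : S != 0.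

Let fold0_JX_mulmx nw (e : 'rV[F2]_#|Coord n dR.-1 nG nw rG|) i :
  fold0 S e i *m J^T = restr0 e *m J^T + (\sum_(0 <= a < i) ublock e a) *m (J *m S^T)^T.
Proof. by rewrite mulmxDl trmx_mul trmxK mulmxA. Qed.

Let wt_ge_div_opnorm nw (e : 'rV[F2]_#|Coord n dR.-1 nG nw rG|) i :
  (i <= dR.-1)%N -> HXd dR nw H_X T H_G *m e^T = 0 -> wblock e i = 0 ->
  fold0 S e i *m J^T != 0 -> (dist H_X J)%:R / opnorm S <= (wt e)%:R.
Proof.
move=> i_le e_ker wi0 fold_log.
rewrite ler_pdivrMr ?opnorm_gt0 // mulrC; apply: le_trans (wt_fold0_le e S_neq0 i_le).
rewrite ler_nat dist_le_wt //; first exact: (fold0_HX e_ker HX_S i_le wi0).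
by rewrite -mulmx_trC_eq0.
Qed.

Lemma dist_HXd_JXMB :
  (dist H_X J)%:R / opnorm S <= (dist (HXd dR dR.-1 H_X T H_G) (JXMB rG dR J S))%:R.
Proof.
apply: ler_dist => [|e e_ker e_log]; first exact: ler_dist_div_card.
apply: (wt_ge_div_opnorm (leqnn _) e_ker).
  by apply/rowP => g; rewrite !mxE; case: insubP => // b; rewrite ltnn.
rewrite fold0_JX_mulmx; apply: mxF_mulmx_tr_neq0 e_log => r.
exact: JXMB_syndrome.
Qed.

Variable gamma : 'M[F2]_(k, rG).
Hypothesis JX_S : J *m S^T = gamma *m H_G.

Section MeasurementKernel.
Variable e : 'rV[F2]_#|Coord n dR.-1 nG dR rG|.
Hypothesis e_ker : HXd dR dR H_X T H_G *m e^T = 0.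

Lemma JXMM_logical : JXMM dR J S gamma *m e^T != 0 ->
  restr0 e *m J^T + wblock e 0 *m gamma^T != 0.
Proof.
move=> e_log; have dR_gt0 : (0 < dR)%N by apply: ltnW.
apply: mxF_mulmx_tr_neq0 e_log => r; rewrite JXMM_syndrome //.
rewrite (wblock_telescope e_ker (leqnn _)) JX_S trmx_mul mulmxA mulmxDl -addrA.
by rewrite (addrCA (_ *m H_G^T *m gamma^T)) mxF2_addrr addr0.
Qed.

Lemma fold0_JX i : (i <= dR.-1)%N -> wblock e i = 0 ->
  fold0 S e i *m J^T = restr0 e *m J^T + wblock e 0 *m gamma^T.
Proof.
move=> i_le wi0; rewrite fold0_JX_mulmx (wblock0_eq e_ker i_le wi0).
by rewrite JX_S trmx_mul mulmxA.
Qed.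

End MeasurementKernel.

Lemma dist_HXd_JXMM :
  Num.min ((dist H_X J)%:R / opnorm S) dR%:R <=
  (dist (HXd dR dR H_X T H_G) (JXMM dR J S gamma))%:R.
Proof.
apply: ler_dist => [|e e_ker e_log]; first by rewrite ge_min ler_dist_div_card.
have [/existsP [i /eqP wi0]|/existsPn w_neq0] :=
  boolP [exists i : 'I_dR, wblock e i == 0].
  have i_le : (i <= dR.-1)%N by have := ltn_ord i; lia.
  rewrite ge_min (wt_ge_div_opnorm i_le e_ker wi0) // (fold0_JX e_ker i_le wi0).
  exact: JXMM_logical.
by rewrite ge_min ler_nat wt_wblocks_neq0 ?orbT.
Qed.

End XDistance.

Lemma ler_minn (B : rat) a b : B <= a%:R -> B <= b%:R -> B <= (minn a b)%:R.
Proof. by rewrite /minn; case: ifP. Qed.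

Lemma ler_ndiv_opnorm nG n (S : 'M[F2]_(nG, n)) a b :
  (a <= b)%N -> a%:R / opnorm S <= b%:R / opnorm S :> rat.
Proof. by move=> ab; rewrite ler_wpM2r ?invr_ge0 ?opnorm_ge0 ?ler_nat. Qed.

Lemma ext0_sub_JZd_adds n nu nG nw rG q c m (A : 'M[F2]_(q, n)) (C : 'M[F2]_(c, n))
    (HZ : 'M[F2]_(m, #|Coord n nu nG nw rG|)) (z : 'rV[F2]_n) :
  (forall a, (a <= A)%MS -> (ext0 nu nG nw rG a <= HZ)%MS) ->
  (z <= A + C)%MS -> (ext0 nu nG nw rG z <= JZd nu nG nw rG C + HZ)%MS.
Proof.
move=> ext0_A /sub_addsmxP[[a c'] ->] /=; rewrite ext0D addrC addmx_sub_adds //.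
  by rewrite ext0_JZd_sub ?submxMl.
by rewrite ext0_A ?submxMl.
Qed.

Section StickerDistance.
Variables (n rX rZ nG rG dR kx kz d : nat).
Variables (H_X : 'M[F2]_(rX, n)) (H_Z : 'M[F2]_(rZ, n)) (T : 'M[F2]_(rX, rG)).
Variables (H_G : 'M[F2]_(rG, nG)) (S : 'M[F2]_(nG, n)).
Variables (J_X : 'M[F2]_(kx, n)) (J_Z : 'M[F2]_(kz, n)).
Hypothesis HX_S : H_X *m S^T = T *m H_G.
Hypothesis S_neq0 : S != 0.
Hypothesis d_le_X : (d <= dist H_X J_X)%N.
Hypothesis d_le_Z : (d <= dist H_Z J_Z)%N.

Let ler_div_dist_JZd nw :
  d%:R / opnorm S <= (dist (HZd dR nw H_Z S H_G) (JZd dR.-1 nG nw rG J_Z))%:R.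
Proof.
apply: le_trans (ler_div_opnorm _ S_neq0) _.
by rewrite ler_nat (leq_trans d_le_Z) ?dist_JZd.
Qed.

Lemma code_dist_measurement_sticker (gamma : 'M[F2]_(kx, rG)) :
  (2 <= dR)%N -> J_X *m S^T = gamma *m H_G ->
  Num.min (d%:R / opnorm S) dR%:R <=
  (code_dist (HXd dR dR H_X T H_G) (HZd dR dR H_Z S H_G)
             (JXMM dR J_X S gamma) (JZd dR.-1 nG dR rG J_Z))%:R.
Proof.
move=> dR_ge2 JX_S; apply: ler_minn.
  apply: le_trans (dist_HXd_JXMM dR_ge2 HX_S S_neq0 JX_S).
  by rewrite le_min !ge_min lexx !orbT andbT ler_ndiv_opnorm.
by apply: le_trans (ler_div_dist_JZd _); rewrite ge_min lexx.
Qed.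

Lemma code_dist_branch_sticker :
  d%:R / opnorm S <=
  (code_dist (HXd dR dR.-1 H_X T H_G) (HZd dR dR.-1 H_Z S H_G)
             (JXMB rG dR J_X S) (JZd dR.-1 nG dR.-1 rG J_Z))%:R.
Proof.
apply: ler_minn; last exact: ler_div_dist_JZd.
by apply: le_trans (dist_HXd_JXMB dR _ HX_S S_neq0); rewrite ler_ndiv_opnorm.
Qed.

End StickerDistance.

Theorem theorem2
  (n rX rZ q c kg nG rG dR : nat)
  (H_X : 'M[F2]_(rX, n)) (H_Z : 'M[F2]_(rZ, n))
  (J_X J_Z : 'M[F2]_(q + c, n)) (F_X F_Z : 'M[F2]_(kg, n))
  (J_ZA : 'M[F2]_(q, n)) (J_ZC : 'M[F2]_(c, n)) (Jbar : 'M[F2]_(q + c))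
  (H_G : 'M[F2]_(rG, nG)) (S : 'M[F2]_(nG, n)) (T : 'M[F2]_(rX, rG))
  (gamma : 'M[F2]_(c, rG)) :
  (kermx H_X^T == H_Z + J_Z + F_Z)%MS ->
  \rank (H_Z + J_Z + F_Z)%MS = (\rank H_Z + \rank J_Z + \rank F_Z)%N ->
  (kermx H_Z^T == H_X + J_X + F_X)%MS ->
  \rank (H_X + J_X + F_X)%MS = (\rank H_X + \rank J_X + \rank F_X)%N ->
  J_X *m J_Z^T = 1%:M ->
  F_X *m F_Z^T = 1%:M ->
  (* v_1..v_q (rows of J_ZA) extended by v_{q+1}..v_k (rows of J_ZC) to a
     basis of rs J_Z, and bar J_Z *)
  row_free (col_mx J_ZA J_ZC) ->
  (col_mx J_ZA J_ZC == J_Z)%MS ->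
  Jbar \in unitmx ->
  col_mx J_ZA J_ZC = Jbar *m J_Z ->
  (2 <= dR)%N ->
  H_X *m S^T = T *m H_G ->
  S != 0 ->
  let J_XA := usubmx (JXprime Jbar J_X) in
  let J_XC := dsubmx (JXprime Jbar J_X) in
  let d := code_dist H_X H_Z J_X J_Z in
  (* (A) measurement sticker, finely devised *)
  ((exists (m : nat) (U : 'M[F2]_(m, n)),
       (U <= H_Z + F_Z)%MS /\ (col_mx J_ZA U == kermx H_G^T *m S)%MS) ->
   J_XC *m S^T = gamma *m H_G ->
   let HMMX := HXd dR dR H_X T H_G in
   let HMMZ := HZd dR dR H_Z S H_G in
   let JMMX := JXMM dR J_XC S gamma in
   let JMMZ := JZd dR.-1 nG dR rG J_ZC in
   ((forall v : 'rV[F2]_n,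
          (v <= H_X)%MS <-> exists h, (h <= HMMX)%MS /\ restr0 h = v) /\
       (forall h : 'rV[F2]_n, (h <= H_Z)%MS -> (ext0 dR.-1 nG dR rG h <= HMMZ)%MS) /\
       (forall x : 'rV[F2]_n, (x <= J_X)%MS -> x *m J_ZA^T = 0 ->
          exists x', (x' <= JMMX)%MS /\ restr0 x' = x) /\
       (forall z : 'rV[F2]_n, (z <= J_Z)%MS ->
          (ext0 dR.-1 nG dR rG z <= JMMZ + HMMZ)%MS) /\
       (forall z : 'rV[F2]_n, (z <= J_ZA)%MS -> (ext0 dR.-1 nG dR rG z <= HMMZ)%MS)
     /\ Num.min ((d%:R : rat) / opnorm S) (dR%:R) <=
         (code_dist HMMX HMMZ JMMX JMMZ)%:R)) /\
  (* (B) branch sticker, coarsely devised *)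
  ((J_ZA <= kermx H_G^T *m S)%MS ->
   let HMBX := HXd dR dR.-1 H_X T H_G in
   let HMBZ := HZd dR dR.-1 H_Z S H_G in
   let JMBX := JXMB rG dR (col_mx J_XA J_XC) S in
   let JMBZ := JZd dR.-1 nG dR.-1 rG (col_mx J_ZA J_ZC) in
   ((forall v : 'rV[F2]_n,
          (v <= H_X)%MS <-> exists h, (h <= HMBX)%MS /\ restr0 h = v) /\
       (forall h : 'rV[F2]_n, (h <= H_Z)%MS -> (ext0 dR.-1 nG dR.-1 rG h <= HMBZ)%MS) /\
       (forall x : 'rV[F2]_n, (x <= J_X)%MS ->
          exists x', (x' <= JMBX)%MS /\ restr0 x' = x) /\
       (forall z : 'rV[F2]_n, (z <= J_Z)%MS -> (ext0 dR.-1 nG dR.-1 rG z <= JMBZ)%MS) /\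
       (forall z : 'rV[F2]_n, (z <= J_ZA)%MS ->
          exists g, (g <= HMBZ)%MS /\ open_supp dR (ext0 dR.-1 nG dR.-1 rG z + g))
     /\ (d%:R : rat) / opnorm S <= (code_dist HMBX HMBZ JMBX JMBZ)%:R)).

Proof.
move=> _ _ _ _ JX_JZ _ _ JZ_eq Jbar_unit JZ_Jbar dR_ge2 HX_S S_neq0 J_XA J_XC d.
have JZ_sub : (J_Z <= J_ZA + J_ZC)%MS by rewrite addsmxE; case/andP: JZ_eq.
have JX_sub : (J_X <= col_mx J_XA J_XC)%MS by rewrite vsubmxK JXprime_sub.
have [dX dZ] : (d <= dist H_X J_X)%N /\ (d <= dist H_Z J_Z)%N.
  by rewrite geq_minl geq_minr.
split.
- case=> m [U [_ /andP[JZA_U _]]] JXC_S.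
  have JZA_glue : (J_ZA <= kermx H_G^T *m S)%MS.
    by move: JZA_U; rewrite col_mx_sub => /andP[].
  have ext0_JZA z : (z <= J_ZA)%MS -> (ext0 dR.-1 nG dR rG z <= HZd dR dR H_Z S H_G)%MS.
    by move=> zA; apply: ext0_glue_HZd_sub (submx_trans zA JZA_glue).
  split; first exact: HXd_restr0P.
  split; first exact: ext0_HZd_sub.
  split.
    by move=> x xJ xA; apply/JXMM_restr0/(JX_sub_JXC JX_JZ Jbar_unit JZ_Jbar).
  split; first by move=> z zJ; apply: ext0_sub_JZd_adds (submx_trans zJ JZ_sub).
  split; first exact: ext0_JZA.
  apply: code_dist_measurement_sticker dR_ge2 JXC_S => //.
    by rewrite (leq_trans dX) // /J_XC /JXprime -mul_dsub_mx dist_mulmx.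
  by rewrite (leq_trans dZ) // -[J_ZC](col_mxKd J_ZA) JZ_Jbar -mul_dsub_mx dist_mulmx.
- move=> JZA_glue.
  split; first exact: HXd_restr0P.
  split; first exact: ext0_HZd_sub.
  split; first by move=> x xJ; apply/JXMB_restr0/(submx_trans xJ JX_sub).
  split; first by move=> z zJ; apply/ext0_JZd_sub; rewrite -addsmxE (submx_trans zJ).
  split; first by move=> z zA; apply: ext0_glue_HZd_open (submx_trans zA JZA_glue).
  apply: code_dist_branch_sticker => //.
    by rewrite vsubmxK (leq_trans dX) ?dist_mulmx.
  by rewrite JZ_Jbar (leq_trans dZ) ?dist_mulmx.
Qed.
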